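(* Let $n \geq 12$ and let $\Gamma_n$ be the group with presentation $$\Gamma_n = \langle s, x \mid [s^n, x] = 1,\ [x, s^i x s^{-i}] = 1 \text{ for } 1 \leq i \leq n-1 \rangle.$$ Then $\Gamma_n$ admits a non-left-orderable HNN extension, i.e., there exist subgroups $A, B \leq \Gamma_n$ and an isomorphism $\phi: A \to B$ such that the HNN extension $(\Gamma_n, A, B, t, \phi)$ is not left-orderable.
   Context: $[a,b]$ denotes the commutator of $a$ and $b$. Given a group $G$, subgroups $A, B \leq G$ and an isomorphism $\phi: A \to B$, the HNN extension $(G, A, B, t, \phi)$ is the quotient of the free product $G \ast \langle t \rangle$ (with $\langle t\rangle$ infinite cyclic) by the normal closure of $\{ t a t^{-1} \phi(a)^{-1} : a \in A\}$. A group is left-orderable if it admits a total order invariant under left multiplication. *)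

From Stdlib Require Import Arith.

Record grp : Type := Grp {
  carrier :> Type;
  gmul : carrier -> carrier -> carrier;
  gone : carrier;
  ginv : carrier -> carrier;
  gmulA : forall a b c, gmul a (gmul b c) = gmul (gmul a b) c;
  gmul1 : forall a, gmul gone a = a;
  gmulV : forall a, gmul (ginv a) a = gone
}.

Arguments gmul {g}.
Arguments gone {g}.
Arguments ginv {g}.

Fixpoint gpow {G : grp} (a : G) (n : nat) : G :=
  match n with
  | O => gone
  | S k => gmul a (gpow a k)
  end.

Definition comm {G : grp} (a b : G) : G :=
  gmul (gmul a b) (gmul (ginv a) (ginv b)).

Definition conjpow {G : grp} (s y : G) (i : nat) : G :=
  gmul (gmul (gpow s i) y) (ginv (gpow s i)).

Definition is_hom {G H : grp} (f : G -> H) : Prop :=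
  forall a b, f (gmul a b) = gmul (f a) (f b).

Definition is_subgroup {G : grp} (A : G -> Prop) : Prop :=
  A gone /\ (forall a b, A a -> A b -> A (gmul a b)) /\ (forall a, A a -> A (ginv a)).

(* phi (a function on G, only its restriction to A matters) is an isomorphism A -> B *)
Definition is_iso_between {G : grp} (A B : G -> Prop) (phi : G -> G) : Prop :=
  (forall a, A a -> B (phi a)) /\
  (forall a b, A a -> A b -> phi (gmul a b) = gmul (phi a) (phi b)) /\
  (forall a b, A a -> A b -> phi a = phi b -> a = b) /\
  (forall b, B b -> exists a, A a /\ phi a = b).

Definition gamma_rels (n : nat) {H : grp} (s x : H) : Prop :=
  comm (gpow s n) x = gone /\
  (forall i, 1 <= i <= n - 1 -> comm x (conjpow s x i) = gone).

(* (G, s, x) is the group with presentation < s, x | gamma_rels n >,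
   characterised by the universal property of the presentation. *)
Definition is_Gamma (n : nat) (G : grp) (s x : G) : Prop :=
  gamma_rels n s x /\
  forall (H : grp) (h k : H), gamma_rels n h k ->
    exists f : G -> H, is_hom f /\ f s = h /\ f x = k /\
      forall g : G -> H, is_hom g -> g s = h -> g x = k -> forall y, g y = f y.

(* (E, iota, t) is the HNN extension (G, A, B, t, phi), i.e. the quotient of
   G * <t> by the normal closure of { t a t^-1 phi(a)^-1 }, characterised by its
   universal property. *)
Definition is_HNN {G : grp} (A B : G -> Prop) (phi : G -> G)
    (E : grp) (iota : G -> E) (t : E) : Prop :=
  is_hom iota /\
  (forall a, A a -> gmul (gmul t (iota a)) (ginv t) = iota (phi a)) /\
  forall (H : grp) (f : G -> H) (h : H), is_hom f ->
    (forall a, A a -> gmul (gmul h (f a)) (ginv h) = f (phi a)) ->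
    exists g : E -> H, is_hom g /\ (forall y, g (iota y) = f y) /\ g t = h /\
      forall g' : E -> H, is_hom g' -> (forall y, g' (iota y) = f y) -> g' t = h ->
        forall z, g' z = g z.

Definition left_orderable (E : grp) : Prop :=
  exists le : E -> E -> Prop,
    (forall a, le a a) /\
    (forall a b, le a b -> le b a -> a = b) /\
    (forall a b c, le a b -> le b c -> le a c) /\
    (forall a b, le a b \/ le b a) /\
    (forall g a b, le a b -> le (gmul g a) (gmul g b)).

From Stdlib Require Import ZArith Lia FunctionalExtensionality Eqdep_dec.

(* In Gamma_n the element z = s^n is central, so it commutes with w = [x, s].
   In the wreath product Z wr Z the images of w and z generate a free abelian
   group of rank 2; hence so do w and z, and swapping them is an isomorphism
   phi of A = <w, z>.

   With y = s x and g = y s y^-1, both s and g are n-th roots of z, and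
   z w = s^(n-1) g,  w^-1 z = g^(n-1) s.
   In a left-ordered group a root of a positive element is positive, so both
   words have the sign of z.  Conjugation by the stable letter t swaps z and w,
   so w z and z^-1 w have the sign of w.  As z w = w z and z^-1 w = (w^-1 z)^-1,
   every choice of signs for z and w is contradictory, unless z = 1 in the HNN
   extension.  This is ruled out by the map to (Z/n^2) x| Z, which identifies
   w with z and sends z to a nontrivial element, so it extends to the HNN
   extension with t |-> 1. *)

Local Infix "**" := gmul (at level 40, left associativity).
#[local] Arguments gmulA {g} a b c.
#[local] Arguments gmul1 {g} a.
#[local] Arguments gmulV {g} a.

Section GroupLaws.

Context {G : grp}.
Implicit Types a b c : G.

Lemma mulgV a : a ** ginv a = gone.
Proof.
  rewrite <- (gmul1 (a ** ginv a)), <- (gmulV (ginv a)) at 1.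
  rewrite <- gmulA, (gmulA (ginv a) a), gmulV, gmul1.
  apply gmulV.
Qed.

Lemma mulg1 a : a ** gone = a.
Proof. rewrite <- (gmulV a), gmulA, mulgV, gmul1. reflexivity. Qed.

Lemma mulKg a b : ginv a ** (a ** b) = b.
Proof. rewrite gmulA, gmulV, gmul1. reflexivity. Qed.

Lemma mulKVg a b : a ** (ginv a ** b) = b.
Proof. rewrite gmulA, mulgV, gmul1. reflexivity. Qed.

Lemma mulgI a b c : a ** b = a ** c -> b = c.
Proof. intro h. rewrite <- (mulKg a b), h, mulKg. reflexivity. Qed.

Lemma invg_unique a b : a ** b = gone -> ginv a = b.
Proof. intro h. rewrite <- (mulKg a b), h, mulg1. reflexivity. Qed.

Lemma invgK a : ginv (ginv a) = a.
Proof. apply invg_unique, gmulV. Qed.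

Lemma invMg a b : ginv (a ** b) = ginv b ** ginv a.
Proof.
  apply invg_unique.
  rewrite <- !gmulA, (gmulA b), mulgV, gmul1, mulgV. reflexivity.
Qed.

Lemma invg1 : ginv (@gone G) = gone.
Proof. apply invg_unique, gmul1. Qed.

Definition commute a b : Prop := a ** b = b ** a.

Lemma commute_sym a b : commute a b -> commute b a.
Proof. unfold commute; auto. Qed.

Lemma commute1 a : commute gone a.
Proof. unfold commute. rewrite gmul1, mulg1. reflexivity. Qed.

Lemma commuteM a b c : commute a c -> commute b c -> commute (a ** b) c.
Proof.
  unfold commute; intros hac hbc.
  rewrite <- gmulA, hbc, gmulA, hac, gmulA. reflexivity.
Qed.

Lemma commuteV a c : commute a c -> commute (ginv a) c.
Proof.
  unfold commute; intro h. apply (mulgI a).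
  rewrite mulKVg, gmulA, h, <- gmulA, mulgV, mulg1. reflexivity.
Qed.

Lemma comm_eq1 a b : comm a b = gone <-> commute a b.
Proof.
  unfold comm, commute. split; intro h.
  - apply invg_unique in h. rewrite <- (invgK (a ** b)), h, invMg, !invgK.
    reflexivity.
  - rewrite h, <- gmulA, (gmulA a), mulgV, gmul1, mulgV. reflexivity.
Qed.

Lemma commute_gpow a c k : commute a c -> commute (gpow a k) c.
Proof. intro h. induction k; simpl; [apply commute1 | apply commuteM; auto]. Qed.

Lemma gpowSr a k : gpow a (S k) = gpow a k ** a.
Proof. symmetry. apply commute_gpow. reflexivity. Qed.

Lemma gpowV a k : gpow (ginv a) k = ginv (gpow a k).
Proof.
  induction k; simpl; [rewrite invg1; reflexivity|].
  rewrite IHk, <- invMg, <- gpowSr. reflexivity.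
Qed.

Lemma gpow_conj a c k : gpow (c ** a ** ginv c) k = c ** gpow a k ** ginv c.
Proof.
  induction k; simpl; [rewrite mulg1, mulgV; reflexivity|].
  rewrite IHk, <- !gmulA, (gmulA (ginv c) c), gmulV, gmul1. reflexivity.
Qed.

Lemma gpow1g k : gpow (@gone G) k = gone.
Proof. induction k; simpl; [|rewrite IHk, gmul1]; reflexivity. Qed.

End GroupLaws.

Section IntegerPowers.

Context {G : grp}.
Implicit Types a b c : G.

Definition zpow a (i : Z) : G :=
  if (0 <=? i)%Z then gpow a (Z.to_nat i) else ginv (gpow a (Z.to_nat (- i))).

Lemma zpow0 a : zpow a 0 = gone.
Proof. reflexivity. Qed.

Lemma zpow1 a : zpow a 1 = a.
Proof. apply mulg1. Qed.

Lemma zpowSr a i : zpow a (i + 1) = zpow a i ** a.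
Proof.
  unfold zpow. destruct (Z.leb_spec 0 i) as [hi|hi].
  - rewrite (proj2 (Z.leb_le 0 (i + 1))) by lia.
    rewrite Z2Nat.inj_add, Nat.add_comm by lia. apply gpowSr.
  - destruct (Z.eq_dec i (-1)) as [->|hi1]; [simpl; rewrite mulg1, gmulV; reflexivity|].
    rewrite (proj2 (Z.leb_gt 0 (i + 1))) by lia.
    replace (Z.to_nat (- i)) with (S (Z.to_nat (- (i + 1)))) by lia.
    simpl. rewrite invMg, <- gmulA, gmulV, mulg1. reflexivity.
Qed.

Lemma zpow_unique a (F : Z -> G) :
  (forall i, F (i + 1)%Z = F i ** a) -> forall i, F i = F 0%Z ** zpow a i.
Proof.
  intros hF i. induction i using Z.peano_ind.
  - rewrite zpow0, mulg1. reflexivity.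
  - rewrite <- Z.add_1_r, hF, IHi, zpowSr, gmulA. reflexivity.
  - apply (f_equal (fun y => y ** ginv a)) in IHi.
    rewrite <- (Z.succ_pred i), <- Z.add_1_r, hF, zpowSr, <- !gmulA, !mulgV,
      !mulg1 in IHi.
    exact IHi.
Qed.

Lemma zpow_eq a (F : Z -> G) :
  F 0%Z = gone -> (forall i, F (i + 1)%Z = F i ** a) -> forall i, zpow a i = F i.
Proof. intros h0 hF i. rewrite (zpow_unique a F hF i), h0, gmul1. reflexivity. Qed.

Lemma zpowD a i j : zpow a (i + j) = zpow a i ** zpow a j.
Proof.
  rewrite (zpow_unique a (fun j => zpow a (i + j))), Z.add_0_r; [reflexivity|].
  intro k. rewrite Z.add_assoc. apply zpowSr.
Qed.

Lemma zpowN a i : zpow a (- i) = ginv (zpow a i).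
Proof.
  symmetry. apply invg_unique. rewrite <- zpowD, Z.add_opp_diag_r. reflexivity.
Qed.

Lemma commute_zpow a c i : commute a c -> commute (zpow a i) c.
Proof.
  intro h. unfold zpow. destruct (0 <=? i)%Z;
    [|apply commuteV]; apply commute_gpow; exact h.
Qed.

Lemma commute_zpow2 a b i j : commute a b -> commute (zpow a i) (zpow b j).
Proof.
  intro h. apply commute_zpow, commute_sym, commute_zpow, commute_sym, h.
Qed.

End IntegerPowers.

Section Homomorphisms.

Context {G H : grp} (f : G -> H).
Hypothesis hf : is_hom f.

Lemma hom1 : f gone = gone.
Proof. apply (mulgI (f gone)). rewrite <- hf, gmul1, mulg1. reflexivity. Qed.

Lemma homV a : f (ginv a) = ginv (f a).
Proof. symmetry. apply invg_unique. rewrite <- hf, mulgV. apply hom1. Qed.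

Lemma hom_gpow a k : f (gpow a k) = gpow (f a) k.
Proof. induction k; simpl; [apply hom1 | rewrite hf, IHk; reflexivity]. Qed.

Lemma hom_zpow a i : f (zpow a i) = zpow (f a) i.
Proof.
  unfold zpow. destruct (0 <=? i)%Z; rewrite ?homV; rewrite hom_gpow; reflexivity.
Qed.

Lemma hom_comm a b : f (comm a b) = comm (f a) (f b).
Proof. unfold comm. rewrite !hf, !homV. reflexivity. Qed.

Lemma hom_comp {K : grp} (g : H -> K) : is_hom g -> is_hom (fun a => g (f a)).
Proof. intros hg a b. rewrite hf, hg. reflexivity. Qed.

End Homomorphisms.

Lemma conj_hom {G : grp} (t : G) : is_hom (fun a => t ** a ** ginv t).
Proof. intros a b. rewrite <- !gmulA, mulKg. reflexivity. Qed.

Section SwapAutomorphism.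

Context {G : grp} (a b : G).
Hypothesis cab : commute a b.

Definition span2 (y : G) : Prop := exists i j, y = zpow a i ** zpow b j.

Lemma span2_mul i j i' j' :
  zpow a i ** zpow b j ** (zpow a i' ** zpow b j') =
  zpow a (i + i') ** zpow b (j + j').
Proof.
  rewrite !zpowD, <- !gmulA. f_equal.
  rewrite !gmulA. f_equal. apply commute_zpow2, commute_sym, cab.
Qed.

Lemma span2_inv i j : ginv (zpow a i ** zpow b j) = zpow a (- i) ** zpow b (- j).
Proof.
  rewrite invMg, !zpowN. symmetry.
  apply commuteV, commute_sym, commuteV, commute_sym, commute_zpow2, cab.
Qed.

Lemma span2_subgroup : is_subgroup span2.
Proof.
  split; [|split].
  - exists 0%Z, 0%Z. rewrite !zpow0, gmul1. reflexivity.
  - intros y y' [i [j ->]] [i' [j' ->]]. exists (i + i')%Z, (j + j')%Z.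
    apply span2_mul.
  - intros y [i [j ->]]. exists (- i)%Z, (- j)%Z. apply span2_inv.
Qed.

Variable coord : G -> Z * Z.
Hypothesis coordE : forall i j, coord (zpow a i ** zpow b j) = (i, j).

Definition swap (y : G) : G := zpow a (snd (coord y)) ** zpow b (fst (coord y)).

Lemma swapE i j : swap (zpow a i ** zpow b j) = zpow a j ** zpow b i.
Proof. unfold swap. rewrite coordE. reflexivity. Qed.

Lemma swap_iso : is_iso_between span2 span2 swap.
Proof.
  split; [|split; [|split]].
  - intros y [i [j ->]]. rewrite swapE. exists j, i. reflexivity.
  - intros y y' [i [j ->]] [i' [j' ->]].
    rewrite span2_mul, !swapE, span2_mul. reflexivity.
  - intros y y' [i [j ->]] [i' [j' ->]]. rewrite !swapE. intro e.
    apply (f_equal coord) in e. rewrite !coordE in e.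
    injection e as -> ->. reflexivity.
  - intros y [i [j ->]]. exists (zpow a j ** zpow b i).
    split; [exists j, i; reflexivity | apply swapE].
Qed.

Lemma span2_left : span2 a.
Proof. exists 1%Z, 0%Z. rewrite zpow1, zpow0, mulg1. reflexivity. Qed.

Lemma span2_right : span2 b.
Proof. exists 0%Z, 1%Z. rewrite zpow1, zpow0, gmul1. reflexivity. Qed.

Lemma swap_left : swap a = b.
Proof.
  pose proof (swapE 1 0) as e. rewrite !zpow1, !zpow0, mulg1, gmul1 in e. exact e.
Qed.

Lemma swap_right : swap b = a.
Proof.
  pose proof (swapE 0 1) as e. rewrite !zpow1, !zpow0, mulg1, gmul1 in e. exact e.
Qed.

Lemma hom_swap {H : grp} (f : G -> H) :
  is_hom f -> f a = f b -> forall y, span2 y -> f (swap y) = f y.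
Proof.
  intros hf eab y [i [j ->]]. rewrite swapE, !hf, !(hom_zpow f hf), eab, <- !zpowD.
  rewrite Z.add_comm. reflexivity.
Qed.

End SwapAutomorphism.

Definition root_word {G : grp} (m : nat) (z u : G) : Prop :=
  exists r r', gpow r (S m) = z /\ gpow r' (S m) = z /\ u = gpow r m ** r'.

Definition root_products {G : grp} (m : nat) (z w : G) : Prop :=
  root_word m z (z ** w) /\ root_word m z (ginv w ** z).

Lemma root_products_hom {G H : grp} (f : G -> H) m (z w : G) :
  is_hom f -> root_products m z w -> root_products m (f z) (f w).
Proof.
  intros hf.
  assert (transport : forall u, root_word m z u -> root_word m (f z) (f u)).
  { intros u [r [r' [hr [hr' ->]]]]. exists (f r), (f r').
    rewrite hf, <- !(hom_gpow f hf), hr, hr'. auto. }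
  intros [hzw hwz]. split.
  - rewrite <- hf. apply transport, hzw.
  - rewrite <- (homV f hf), <- hf. apply transport, hwz.
Qed.

Section LeftOrder.

Context {E : grp} (le : E -> E -> Prop).

Definition is_left_order : Prop :=
  (forall a, le a a) /\
  (forall a b, le a b -> le b a -> a = b) /\
  (forall a b c, le a b -> le b c -> le a c) /\
  (forall a b, le a b \/ le b a) /\
  (forall g a b, le a b -> le (g ** a) (g ** b)).

Hypothesis hle : is_left_order.

Definition pos (u : E) : Prop := le gone u /\ u <> gone.

Lemma pos_mul a b : pos a -> pos b -> pos (a ** b).
Proof.
  destruct hle as (_ & hanti & htrans & _ & hmul).
  intros [ha ha1] [hb hb1].
  assert (hab : le a (a ** b)) by (rewrite <- (mulg1 a) at 1; apply hmul, hb).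
  split; [exact (htrans _ _ _ ha hab)|].
  intro e. apply ha1, hanti; [|exact ha]. rewrite e in hab. exact hab.
Qed.

Lemma pos_posV a : pos a -> pos (ginv a) -> False.
Proof.
  destruct hle as (_ & hanti & _ & _ & hmul).
  intros [ha ha1] [hb _]. apply ha1, hanti; [|exact ha].
  apply (hmul a) in hb. rewrite mulg1, mulgV in hb. exact hb.
Qed.

Lemma pos_or_posV a : a <> gone -> pos a \/ pos (ginv a).
Proof.
  destruct hle as (_ & _ & _ & htot & hmul).
  intro ha1. destruct (htot gone a) as [ha|ha]; [left; split; auto|right].
  split.
  - apply (hmul (ginv a)) in ha. rewrite mulg1, gmulV in ha. exact ha.
  - intro e. apply ha1. rewrite <- (invgK a), e. apply invg1.
Qed.

Lemma pos_gpow a k : pos a -> pos (gpow a (S k)).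
Proof.
  intro ha. induction k; [simpl; rewrite mulg1; exact ha|].
  apply pos_mul; assumption.
Qed.

Lemma pos_root a z k : gpow a (S k) = z -> pos z -> pos a.
Proof.
  intros e hz. destruct (pos_or_posV a) as [ha|ha]; [|exact ha|].
  - intros ->. rewrite gpow1g in e. subst z. apply hz. reflexivity.
  - exfalso. apply (pos_gpow _ k) in ha. rewrite gpowV, e in ha.
    exact (pos_posV z hz ha).
Qed.

Lemma pos_gpow_mul a b k : pos a -> pos b -> pos (gpow a k ** b).
Proof.
  intros ha hb. induction k; simpl; [rewrite gmul1; exact hb|].
  rewrite <- gmulA. apply pos_mul; assumption.
Qed.

Lemma pos_mul_gpow a b k : pos a -> pos b -> pos (b ** gpow a k).
Proof.
  intros ha hb. induction k; [simpl; rewrite mulg1; exact hb|].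
  rewrite gpowSr, gmulA. apply pos_mul; assumption.
Qed.

Lemma root_word_sign m z u :
  root_word m z u -> (pos z -> pos u) /\ (pos (ginv z) -> pos (ginv u)).
Proof.
  intros [r [r' [hr [hr' ->]]]]. split; intro hz.
  - apply pos_gpow_mul; [exact (pos_root r z m hr hz) | exact (pos_root r' z m hr' hz)].
  - rewrite invMg, <- gpowV.
    apply pos_mul_gpow; apply (pos_root _ (ginv z) m); try assumption;
      rewrite gpowV; f_equal; assumption.
Qed.

Lemma root_products_swap_false m (z w : E) :
  z <> gone -> w <> gone -> commute z w ->
  root_products m z w -> root_products m w z -> False.
Proof.
  intros hz1 hw1 czw [h1 h2] [h3 h4].
  destruct (root_word_sign _ _ _ h1) as [p1 n1].
  destruct (root_word_sign _ _ _ h2) as [p2 n2].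
  destruct (root_word_sign _ _ _ h3) as [p3 n3].
  destruct (root_word_sign _ _ _ h4) as [p4 n4].
  assert (einv : ginv (ginv w ** z) = ginv z ** w) by (rewrite invMg, invgK; reflexivity).
  unfold commute in czw. rewrite <- czw in p3, n3. rewrite einv in n2. rewrite <- einv in p4.
  destruct (pos_or_posV z hz1) as [hz|hz], (pos_or_posV w hw1) as [hw|hw].
  - exact (pos_posV _ (p2 hz) (p4 hw)).
  - exact (pos_posV _ (p1 hz) (n3 hw)).
  - exact (pos_posV _ (p3 hw) (n1 hz)).
  - exact (pos_posV _ (n2 hz) (n4 hw)).
Qed.

End LeftOrder.

Lemma root_products_not_left_orderable {E : grp} m (z w : E) :
  z <> gone -> w <> gone -> commute z w ->
  root_products m z w -> root_products m w z -> ~ left_orderable E.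
Proof.
  intros hz1 hw1 czw hzw hwz [le hle].
  exact (root_products_swap_false le hle m z w hz1 hw1 czw hzw hwz).
Qed.

Lemma conj_swap_not_left_orderable {G E : grp} (iota : G -> E) (t : E) m (z w : G) :
  is_hom iota -> commute z w -> root_products m z w ->
  t ** iota z ** ginv t = iota w -> t ** iota w ** ginv t = iota z ->
  iota z <> gone -> ~ left_orderable E.
Proof.
  intros hiota czw hzw tz tw hz1.
  assert (hw1 : iota w <> gone).
  { intro e. rewrite e in tz. apply (f_equal (fun y => ginv t ** y ** t)) in tz.
    rewrite <- !gmulA, mulKg, gmulV, mulg1, gmul1, gmulV in tz. exact (hz1 tz). }
  assert (hconj : is_hom (fun y => t ** iota y ** ginv t))
    by exact (hom_comp iota hiota _ (conj_hom t)).
  apply (root_products_not_left_orderable m (iota z) (iota w) hz1 hw1).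
  - unfold commute. rewrite <- !hiota, czw. reflexivity.
  - apply root_products_hom; assumption.
  - pose proof (root_products_hom _ m z w hconj hzw) as h.
    cbv beta in h. rewrite tz, tw in h. exact h.
Qed.

Lemma HNN_iota_neq1 {G : grp} (A B : G -> Prop) (phi : G -> G) (E : grp) (iota : G -> E) (t : E)
    {K : grp} (f : G -> K) :
  is_HNN A B phi E iota t -> is_hom f -> (forall a, A a -> f (phi a) = f a) ->
  forall y, f y <> gone -> iota y <> gone.
Proof.
  intros [_ [_ UPE]] hf hphi y hy e.
  destruct (UPE K f gone hf) as [g [hg [giota _]]].
  { intros a ha. rewrite gmul1, invg1, mulg1, hphi by exact ha. reflexivity. }
  apply hy. rewrite <- giota, e. apply (hom1 g hg).
Qed.

Section CentralPower.

Context {G : grp} (s x : G) (m : nat).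
Hypothesis czx : commute (gpow s (S m)) x.

Lemma commute_comm_gpow : commute (comm x s) (gpow s (S m)).
Proof.
  assert (czs : commute (gpow s (S m)) s) by (apply commute_gpow; reflexivity).
  unfold comm.
  apply commuteM; apply commuteM; try apply commuteV; apply commute_sym; assumption.
Qed.

Lemma root_products_comm : root_products m (gpow s (S m)) (comm x s).
Proof.
  set (y := s ** x). set (g := y ** s ** ginv y).
  assert (hg : gpow g (S m) = gpow s (S m)).
  { assert (cyz : commute y (gpow s (S m))).
    { apply commuteM; apply commute_sym; [apply commute_gpow; reflexivity | exact czx]. }
    unfold g. rewrite gpow_conj, cyz, <- gmulA, mulgV, mulg1. reflexivity. }
  split; [exists s, g | exists g, s]; repeat split; auto.
  - unfold g, y, comm. rewrite gpowSr, invMg, <- !gmulA. reflexivity.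
  - unfold g, y, comm. rewrite gpow_conj, !invMg, !invgK.
    assert (cxz : commute (ginv x) (gpow s (S m))) by (apply commuteV, commute_sym, czx).
    rewrite <- !gmulA. f_equal. f_equal.
    unfold commute in cxz. rewrite cxz. simpl gpow.
    rewrite <- gmulA, mulKg, gmulV, mulg1. reflexivity.
Qed.

End CentralPower.

Open Scope Z_scope.

(* (f, k) is the element of the wreath product Z wr Z = Z^Z x| Z with lamp
   configuration f and shift k; shifts act on configurations by translation. *)
Definition wr_mul (p q : (Z -> Z) * Z) : (Z -> Z) * Z :=
  (fun k => fst p k + fst q (k - snd p), snd p + snd q).
Definition wr_inv (p : (Z -> Z) * Z) : (Z -> Z) * Z :=
  (fun k => - fst p (k + snd p), - snd p).
Definition wr_one : (Z -> Z) * Z := (fun _ => 0, 0).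

Lemma wr_eq (f g : Z -> Z) (k l : Z) : (forall i, f i = g i) -> k = l -> (f, k) = (g, l).
Proof. intros hfg ->. apply functional_extensionality in hfg. subst. reflexivity. Qed.

Lemma wr_mulA p q r : wr_mul p (wr_mul q r) = wr_mul (wr_mul p q) r.
Proof.
  destruct p as [f k], q as [g l], r as [h j]. apply wr_eq; intros; cbn; [|ring].
  rewrite Z.sub_add_distr. ring.
Qed.

Lemma wr_mul1 p : wr_mul wr_one p = p.
Proof. destruct p as [f k]. apply wr_eq; intros; cbn; [rewrite Z.sub_0_r|]; ring. Qed.

Lemma wr_mulV p : wr_mul (wr_inv p) p = wr_one.
Proof. destruct p as [f k]. apply wr_eq; intros; cbn; [rewrite Z.sub_opp_r|]; ring. Qed.

Definition wreath : grp := Grp ((Z -> Z) * Z) wr_mul wr_one wr_inv wr_mulA wr_mul1 wr_mulV.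

Definition wr_shift : wreath := (fun _ => 0, 1).

Definition lamps (n k : Z) : Z := if k mod n =? 0 then 1 else 0.

Definition wr_lamps (n : Z) : wreath := (lamps n, 0).

Ltac wr_simpl :=
  change (@gmul wreath) with wr_mul; change (@ginv wreath) with wr_inv;
  change (@gone wreath) with wr_one;
  unfold wr_mul, wr_inv, wr_one, wr_shift, wr_lamps; cbn [fst snd];
  apply wr_eq; intros.

Lemma wr_gpow_shift (k : nat) : gpow wr_shift k = (fun _ => 0, Z.of_nat k).
Proof.
  induction k as [|k IHk]; [reflexivity|].
  simpl gpow. rewrite IHk. wr_simpl; lia.
Qed.

Lemma wr_commute_lamps (f g : Z -> Z) : commute ((f, 0) : wreath) (g, 0).
Proof. unfold commute. wr_simpl; [rewrite !Z.sub_0_r|]; ring. Qed.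

Lemma wr_conjpow_shift (f : Z -> Z) (j : nat) :
  conjpow wr_shift ((f, 0) : wreath) j = (fun k => f (k - Z.of_nat j), 0).
Proof. unfold conjpow. rewrite wr_gpow_shift. wr_simpl; ring. Qed.

Lemma wr_gamma_rels (n : nat) : gamma_rels n wr_shift (wr_lamps (Z.of_nat n)).
Proof.
  split.
  - apply comm_eq1. unfold commute. rewrite wr_gpow_shift. wr_simpl; [|ring].
    unfold lamps. replace (i - Z.of_nat n) with (i + (-1) * Z.of_nat n) by ring.
    rewrite Z_mod_plus_full. ring.
  - intros j _. apply comm_eq1. unfold wr_lamps. rewrite wr_conjpow_shift.
    apply wr_commute_lamps.
Qed.

Lemma wr_zpow_lamps (f : Z -> Z) i : @zpow wreath (f, 0) i = (fun k => i * f k, 0).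
Proof.
  apply (zpow_eq _ (fun i => ((fun k => i * f k, 0) : wreath))); [|intro j];
    wr_simpl; rewrite ?Z.sub_0_r; ring.
Qed.

Lemma wr_zpow_shifts (l : Z) i : @zpow wreath (fun _ => 0, l) i = (fun _ => 0, i * l).
Proof.
  apply (zpow_eq _ (fun i => ((fun _ => 0, i * l) : wreath))); [|intro j];
    wr_simpl; rewrite ?Z.sub_0_r; ring.
Qed.

Lemma wr_comm_lamps_shift (n : Z) :
  comm (wr_lamps n) wr_shift = (fun k => lamps n k - lamps n (k - 1), 0).
Proof.
  unfold comm. wr_simpl; [|ring].
  replace (i - (0 + 1) + 0) with (i - 1) by ring. ring.
Qed.

Lemma Gamma_coords (n : nat) (G : grp) (s x : G) :
  (2 <= n)%nat -> is_Gamma n G s x ->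
  exists c : G -> Z * Z, forall i j, c (zpow (comm x s) i ** zpow (gpow s n) j) = (i, j).
Proof.
  intros hn [_ UP].
  destruct (UP wreath wr_shift (wr_lamps (Z.of_nat n)) (wr_gamma_rels n))
    as [f [hf [fs [fx _]]]].
  exists (fun y => (fst (f y) 0, snd (f y) / Z.of_nat n)).
  intros i j.
  rewrite hf, !(hom_zpow f hf), (hom_comm f hf), (hom_gpow f hf), fs, fx.
  rewrite wr_comm_lamps_shift, wr_gpow_shift, wr_zpow_lamps, wr_zpow_shifts.
  assert (lamps_0 : lamps (Z.of_nat n) 0 = 1) by reflexivity.
  assert (lamps_m1 : lamps (Z.of_nat n) (0 - 1) = 0).
  { unfold lamps. rewrite <- (Z.mod_unique (0 - 1) (Z.of_nat n) (-1) (Z.of_nat n - 1)) by lia.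
    destruct (Z.eqb_spec (Z.of_nat n - 1) 0); lia. }
  change (@gmul wreath) with wr_mul. unfold wr_mul. cbn [fst snd].
  rewrite lamps_0, lamps_m1, Z.add_0_l, Z.div_mul by lia. f_equal; ring.
Qed.

Section ModSquareExtension.

Variable n : nat.
Hypothesis n_ge2 : (2 <= n)%nat.

Local Notation N := (Z.of_nat n * Z.of_nat n).

Lemma modulus_nz : N <> 0.
Proof. nia. Qed.

(* (a, k) is the element of (Z/n^2) x| Z whose Z-part k acts by multiplication
   by (1 + n)^k = 1 + k n (mod n^2). *)
Definition sdp_car : Type := {p : Z * Z | fst p mod N = fst p}.

Definition sdp_mk (p : Z * Z) : sdp_car :=
  exist _ (fst p mod N, snd p) (Z.mod_mod (fst p) N modulus_nz).

Definition sdp_rmul (p q : Z * Z) : Z * Z :=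
  (fst p + (1 + snd p * Z.of_nat n) * fst q, snd p + snd q).
Definition sdp_rinv (p : Z * Z) : Z * Z :=
  (- ((1 - snd p * Z.of_nat n) * fst p), - snd p).

Definition sdp_mul (p q : sdp_car) : sdp_car := sdp_mk (sdp_rmul (proj1_sig p) (proj1_sig q)).
Definition sdp_inv (p : sdp_car) : sdp_car := sdp_mk (sdp_rinv (proj1_sig p)).
Definition sdp_one : sdp_car := sdp_mk (0, 0).

Ltac sdp_red := cbn [fst snd proj1_sig sdp_mk sdp_rmul sdp_rinv sdp_mul sdp_inv].

Lemma sdp_mk_eq (u v : Z * Z) :
  (exists q, fst u = fst v + q * N) -> snd u = snd v -> sdp_mk u = sdp_mk v.
Proof.
  intros [q hq] hs. apply eq_sig_hprop; [intros; apply UIP_dec, Z.eq_dec|].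
  sdp_red. rewrite hq, Z_mod_plus_full, hs. reflexivity.
Qed.

Lemma sdp_mk_val (p : sdp_car) : sdp_mk (proj1_sig p) = p.
Proof.
  destruct p as [[a k] h]. apply eq_sig_hprop; [intros; apply UIP_dec, Z.eq_dec|].
  cbn [fst] in h. sdp_red. rewrite h. reflexivity.
Qed.

Lemma sdp_ind (P : sdp_car -> Prop) : (forall u, P (sdp_mk u)) -> forall p, P p.
Proof. intros h p. rewrite <- sdp_mk_val. apply h. Qed.

Lemma sdp_mul_mk u v : sdp_mul (sdp_mk u) (sdp_mk v) = sdp_mk (sdp_rmul u v).
Proof.
  apply sdp_mk_eq; [|reflexivity]. sdp_red.
  rewrite (Z.mod_eq (fst u) N modulus_nz), (Z.mod_eq (fst v) N modulus_nz).
  exists (- (fst u / N) - (1 + snd u * Z.of_nat n) * (fst v / N)). ring.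
Qed.

Lemma sdp_inv_mk u : sdp_inv (sdp_mk u) = sdp_mk (sdp_rinv u).
Proof.
  apply sdp_mk_eq; [|reflexivity]. sdp_red.
  rewrite (Z.mod_eq (fst u) N modulus_nz).
  exists ((1 - snd u * Z.of_nat n) * (fst u / N)). ring.
Qed.

Ltac sdp_simpl := repeat first [rewrite sdp_mul_mk | rewrite sdp_inv_mk].

Lemma sdp_mulA p q r : sdp_mul p (sdp_mul q r) = sdp_mul (sdp_mul p q) r.
Proof.
  revert p q r. refine (sdp_ind _ _); intro u. refine (sdp_ind _ _); intro v.
  refine (sdp_ind _ _); intro w. sdp_simpl. apply sdp_mk_eq; sdp_red; [|ring].
  exists (snd u * snd v * fst w). ring.
Qed.

Lemma sdp_mul1 p : sdp_mul sdp_one p = p.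
Proof.
  revert p. refine (sdp_ind _ _); intro u. unfold sdp_one. sdp_simpl.
  apply sdp_mk_eq; sdp_red; [exists 0|]; ring.
Qed.

Lemma sdp_mulV p : sdp_mul (sdp_inv p) p = sdp_one.
Proof.
  revert p. refine (sdp_ind _ _); intro u. unfold sdp_one. sdp_simpl.
  apply sdp_mk_eq; sdp_red; [exists 0|]; ring.
Qed.

Definition sdp : grp := Grp sdp_car sdp_mul sdp_one sdp_inv sdp_mulA sdp_mul1 sdp_mulV.

Definition sdp_trans : sdp := sdp_mk (1, 0).
Definition sdp_act : sdp := sdp_mk (0, 1).

Ltac sdp_grp :=
  change (@gmul sdp) with sdp_mul; change (@ginv sdp) with sdp_inv;
  unfold sdp_trans, sdp_act; sdp_simpl; apply sdp_mk_eq; sdp_red.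

Lemma sdp_gpow_trans (k : nat) : gpow sdp_trans k = sdp_mk (Z.of_nat k, 0).
Proof.
  induction k as [|k IHk]; [reflexivity|].
  simpl gpow. rewrite IHk. sdp_grp; [exists 0|]; lia.
Qed.

Lemma sdp_gamma_rels : gamma_rels n sdp_trans sdp_act.
Proof.
  split.
  - apply comm_eq1. unfold commute. rewrite sdp_gpow_trans. sdp_grp; [exists (-1)|]; ring.
  - intros i _. apply comm_eq1. unfold conjpow, commute. rewrite sdp_gpow_trans.
    sdp_grp; [exists (- Z.of_nat i)|]; ring.
Qed.

Lemma sdp_comm_act_trans : comm sdp_act sdp_trans = gpow sdp_trans n.
Proof. unfold comm. rewrite sdp_gpow_trans. sdp_grp; [exists 1|]; ring. Qed.

Lemma sdp_gpow_trans_ne1 : gpow sdp_trans n <> gone.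
Proof.
  rewrite sdp_gpow_trans. intro e. apply (f_equal (fun p => fst (proj1_sig p))) in e.
  cbn [fst proj1_sig sdp_mk gone sdp sdp_one] in e.
  rewrite Z.mod_small, Z.mod_0_l in e by nia. lia.
Qed.

End ModSquareExtension.

Close Scope Z_scope.

Lemma Gamma_identifying_quotient (n : nat) (G : grp) (s x : G) :
  2 <= n -> is_Gamma n G s x ->
  exists (K : grp) (f : G -> K),
    is_hom f /\ f (comm x s) = f (gpow s n) /\ f (gpow s n) <> gone.
Proof.
  intros hn [_ UP].
  destruct (UP (sdp n hn) (sdp_trans n hn) (sdp_act n hn) (sdp_gamma_rels n hn))
    as [f [hf [fs [fx _]]]].
  exists (sdp n hn), f. split; [exact hf|].
  rewrite (hom_comm f hf), (hom_gpow f hf), fs, fx.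
  split; [apply sdp_comm_act_trans | apply sdp_gpow_trans_ne1].
Qed.

Theorem proposition1p6 :
  forall (n : nat), 12 <= n ->
  forall (G : grp) (s x : G), is_Gamma n G s x ->
  exists (A B : G -> Prop) (phi : G -> G),
    is_subgroup A /\ is_subgroup B /\ is_iso_between A B phi /\
    forall (E : grp) (iota : G -> E) (t : E),
      is_HNN A B phi E iota t -> ~ left_orderable E.
Proof.
  intros n hn G s x HG.
  destruct n as [|m]; [lia|].
  set (z := gpow s (S m)). set (w := comm x s).
  assert (czx : commute z x) by apply comm_eq1, (proj1 (proj1 HG)).
  assert (cwz : commute w z) by apply commute_comm_gpow, czx.
  destruct (Gamma_coords (S m) G s x ltac:(lia) HG) as [c hc].
  exists (span2 w z), (span2 w z), (swap w z c).
  split; [apply span2_subgroup, cwz|].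
  split; [apply span2_subgroup, cwz|].
  split; [apply swap_iso; assumption|].
  intros E iota t HNN.
  destruct (Gamma_identifying_quotient (S m) G s x ltac:(lia) HG) as [K [f [hf [fwz fz]]]].
  pose proof HNN as [hiota [hconj _]].
  apply (conj_swap_not_left_orderable iota t m z w hiota).
  - apply commute_sym, cwz.
  - apply root_products_comm, czx.
  - rewrite hconj, (swap_right w z c hc) by apply span2_right. reflexivity.
  - rewrite hconj, (swap_left w z c hc) by apply span2_left. reflexivity.
  - apply (HNN_iota_neq1 _ _ _ _ _ _ f HNN hf); [apply hom_swap; assumption | exact fz].
Qed.
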